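(* Let $a_1,\dots,a_N$ be pairwise distinct nonzero complex numbers. The eigenvalues of $\mathbf{S}_a$ are $a_1,\dots,a_N$. Define $N\times N$ matrices $\mathbf{D}_a=(d_{i,j})$ and $\mathbf{E}_a=(e_{i,j})$ by, for $i\ge j$, $$d_{i,j}=\frac{a_i}{a_N}\prod_{k=i+1}^{N}\Big(1-\frac{a_k}{a_j}\Big),\qquad e_{i,j}=\frac{a_N}{a_i}\prod_{\substack{k=j\\k\ne i}}^{N}\frac{1}{1-\frac{a_k}{a_i}},$$ and $d_{i,j}=e_{i,j}=0$ for $i<j$. Then for each $j$, the column $(d_{1,j},\dots,d_{N,j})^T$ is an eigenvector of $\mathbf{S}_a$ with eigenvalue $a_j$; moreover $\mathbf{D}_a^{-1}=\mathbf{E}_a$, so that $$\mathbf{S}_a=\mathbf{D}_a\,\mathrm{diag}(a_1,\dots,a_N)\,\mathbf{E}_a,\quad\text{and hence}\quad \mathbf{S}_a^k=\mathbf{D}_a\,\mathrm{diag}(a_1^k,\dots,a_N^k)\,\mathbf{E}_a\ \text{ for all integers }k\ge 1.$$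
   Context: For a sequence $a=(a_1,\dots,a_N)$ of complex numbers, $\mathbf{S}_a$ denotes the $N\times N$ matrix with $(\mathbf{S}_a)_{i,j}=a_i$ if $i\ge j$ and $0$ otherwise. $\mathrm{diag}(x_1,\dots,x_N)$ is the diagonal matrix with diagonal entries $x_1,\dots,x_N$. *)

From HB Require Import structures.
From mathcomp Require Import all_boot all_order all_algebra.
Set Implicit Arguments. Unset Strict Implicit. Unset Printing Implicit Defensive.
Import Order.TTheory GRing.Theory Num.Theory.
Local Open Scope ring_scope.

(* Indices 1..N are represented by 'I_N with N = n.+1 (0-based); a_N = a ord_max. *)

Definition S_mx (F : fieldType) (n : nat) (a : 'I_n.+1 -> F) : 'M[F]_n.+1 :=
  \matrix_(i, j) if (j <= i)%N then a i else 0.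

Definition D_mx (F : fieldType) (n : nat) (a : 'I_n.+1 -> F) : 'M[F]_n.+1 :=
  \matrix_(i, j) if (j <= i)%N then
      a i / a ord_max * \prod_(k : 'I_n.+1 | (i < k)%N) (1 - a k / a j)
    else 0.

Definition E_mx (F : fieldType) (n : nat) (a : 'I_n.+1 -> F) : 'M[F]_n.+1 :=
  \matrix_(i, j) if (j <= i)%N then
      a ord_max / a i * \prod_(k : 'I_n.+1 | (j <= k)%N && (k != i)) (1 - a k / a i)^-1
    else 0.

Definition diagN (F : fieldType) (n : nat) (x : 'I_n.+1 -> F) : 'M[F]_n.+1 :=
  diag_mx (\row_i x i).

From HB Require Import structures.
From mathcomp Require Import all_boot all_order all_algebra.
From mathcomp Require Import zify ring.
Import Order.TTheory GRing.Theory Num.Theory.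
Set Implicit Arguments.
Unset Strict Implicit.
Unset Printing Implicit Defensive.
Local Open Scope ring_scope.

(* S_a acts by (S_a v)_i = a_i (v_1 + ... + v_i).  With P_j(m) the product of
   the factors 1 - a_k/a_j over k >= m, one has a_m P_j(m+1) =
   a_j (P_j(m+1) - P_j(m)) and P_j(j) = 0, so the partial sums of the j-th
   column of D_a telescope and S_a D_a = D_a diag(a); the same telescoping on
   the rows of E_a gives E_a S_a = diag(a) E_a.  Hence E_a D_a commutes with
   diag(a), whose entries are distinct, so it is diagonal; as a product of
   lower triangular matrices its diagonal entries are e_ii d_ii = 1. *)

Lemma sum_ord_nat_range (V : nmodType) (N j i : nat) (G : nat -> V) : (i < N)%N ->
  \sum_(m < N | (j <= m <= i)%N) G m = \sum_(j <= m < i.+1) G m.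
Proof. by move=> iN; rewrite big_geq_mkord (big_ord_widen_cond N). Qed.

Lemma mulmx_trig_diag (R : pzSemiRingType) (m : nat) (A B : 'M[R]_m) (i : 'I_m) :
  is_trig_mx A -> is_trig_mx B -> (A *m B) i i = A i i * B i i.
Proof.
move=> /is_trig_mxP trigA /is_trig_mxP trigB.
rewrite mxE (bigD1 i) //= big1 ?addr0 // => k /negPf ki.
case: (ltngtP i k) => [ik|ik|/val_inj/eqP]; last by rewrite eq_sym ki.
- by rewrite trigA ?mul0r.
- by rewrite trigB ?mulr0.
Qed.

Lemma comm_diag_mx_is_diag (R : idomainType) (m : nat) (d : 'I_m -> R) (M : 'M[R]_m) :
  injective d -> M *m diag_mx (\row_i d i) = diag_mx (\row_i d i) *m M -> is_diag_mx M.
Proof.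
move=> injd commM; apply/is_diag_mxP => i j ij.
have /eqP := congr1 (fun A : 'M[R]_m => A i j) commM.
rewrite mul_mx_diag mul_diag_mx !mxE mulrC -subr_eq0 -mulrBl mulf_eq0 subr_eq0.
by rewrite (inj_eq injd) => /orP [/eqP ji|/eqP //]; rewrite ji eqxx in ij.
Qed.

Lemma eigenvalue_trig_mx (F : fieldType) (m : nat) (A : 'M[F]_m) (x : F) :
  is_trig_mx A -> eigenvalue A x <-> exists i, x = A i i.
Proof.
move=> trigA; rewrite eigenvalue_root_char char_poly_trig // /root horner_prod.
under eq_bigr do rewrite hornerXsubC.
split=> [/prodf_eq0 [i _]|[i ->]]; first by rewrite subr_eq0 => /eqP ->; exists i.
by apply/prodf_eq0; exists i; rewrite ?subrr.
Qed.

Lemma conj_mx_exp (R : pzRingType) (m : nat) (D E M : 'M[R]_m) (k : nat) :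
  E *m D = 1%:M -> (D *m M *m E) ^+ k.+1 = D *m M ^+ k.+1 *m E.
Proof.
rewrite !mulmxE => ED; elim: k => [|k IH]; first by rewrite !expr1.
by rewrite exprSr IH [M ^+ k.+2]exprSr -!mulrA (mulrA E) ED mul1r.
Qed.

Lemma diagN_exp (F : fieldType) (n : nat) (x : 'I_n.+1 -> F) (k : nat) :
  diagN x ^+ k = diagN (fun i => x i ^+ k).
Proof.
elim: k => [|k IH].
  by apply/matrixP => i j; rewrite !mxE; case: eqP.
rewrite exprS IH /diagN -mulmxE mul_diag_mx.
by apply/matrixP => i j; rewrite !mxE exprS mulrnAr.
Qed.

Section TriangularEigenbasis.
Variables (F : fieldType) (n : nat) (a : 'I_n.+1 -> F).
Hypotheses (a_neq0 : forall i, a i != 0) (a_inj : injective a).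

Lemma one_sub_div_neq0 (k l : 'I_n.+1) : k != l -> 1 - a k / a l != 0.
Proof.
move=> kl; rewrite -(divff (a_neq0 l)) -mulrBl mulf_neq0 ?invr_eq0 ?a_neq0 //.
by rewrite subr_eq0 (inj_eq a_inj) eq_sym.
Qed.

Definition tail_prod (j : 'I_n.+1) (m : nat) : F :=
  \prod_(k : 'I_n.+1 | (m <= k)%N) (1 - a k / a j).

Definition tail_inv_prod (i : 'I_n.+1) (m : nat) : F :=
  \prod_(k : 'I_n.+1 | (m <= k)%N && (k != i)) (1 - a k / a i)^-1.

Lemma tail_prodS (j : 'I_n.+1) (m : nat) : (m <= n)%N ->
  tail_prod j m = (1 - a (inord m) / a j) * tail_prod j m.+1.
Proof.
move=> mn; rewrite /tail_prod (bigD1 (inord m)) /= ?inordK //.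
by congr (_ * _); apply: eq_bigl => k; rewrite -val_eqE /= inordK //; lia.
Qed.

Lemma tail_prod_id (j : 'I_n.+1) : tail_prod j j = 0.
Proof. by apply/eqP/prodf_eq0; exists j; rewrite ?divff ?subrr. Qed.

Lemma tail_prod_neq0 (j : 'I_n.+1) (m : nat) : (j < m)%N -> tail_prod j m != 0.
Proof.
move=> jm; apply/prodf_neq0 => k mk; apply: one_sub_div_neq0.
by rewrite -val_eqE /=; lia.
Qed.

Lemma tail_inv_prodS (i : 'I_n.+1) (m : nat) : (m < i)%N ->
  tail_inv_prod i m = (1 - a (inord m) / a i)^-1 * tail_inv_prod i m.+1.
Proof.
move=> mi; have mn : (m < n.+1)%N by apply: ltn_trans mi (ltn_ord i).
rewrite /tail_inv_prod (bigD1 (inord m)) /=; last first.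
  by rewrite inordK // leqnn -val_eqE /= inordK //; lia.
congr (_ * _); apply: eq_bigl => k; rewrite -!val_eqE /= inordK //; lia.
Qed.

Lemma tail_inv_prod_id (i : 'I_n.+1) : tail_inv_prod i i = (tail_prod i i.+1)^-1.
Proof.
rewrite /tail_inv_prod /tail_prod prodfV; congr (_^-1).
by apply: eq_bigl => k; rewrite -val_eqE /=; lia.
Qed.

Lemma sum_tail_prod (j : 'I_n.+1) (i : nat) : (j <= i <= n)%N ->
  \sum_(j <= m < i.+1) a (inord m) * tail_prod j m.+1 = a j * tail_prod j i.+1.
Proof.
move=> /andP [ji iN].
rewrite (telescope_sumr_eq (fun m => a j * tail_prod j m) _ (leqW ji)).
  by rewrite tail_prod_id mulr0 subr0.
move=> m /andP [_ mi]; rewrite (@tail_prodS j m) 1?(leq_trans _ iN) //.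
by field.
Qed.

Lemma sum_tail_inv_prod (i : 'I_n.+1) (j : nat) : (j <= i)%N ->
  \sum_(j <= m < i.+1) a (inord m) * tail_inv_prod i m = a i * tail_inv_prod i j.
Proof.
move=> ji; rewrite big_nat_recr //= inord_val.
rewrite (telescope_sumr_eq (fun m => - (a i * tail_inv_prod i m))) //; first by ring.
move=> m /andP [_ mi]; rewrite (tail_inv_prodS mi).
have mi' : inord m != i by rewrite -val_eqE /= inordK ?(ltn_trans mi) //; lia.
move: (tail_inv_prod _ _) => P.
by field; rewrite a_neq0 subr_eq0 (inj_eq a_inj) eq_sym mi'.
Qed.

Lemma D_mxE (i j : 'I_n.+1) :
  D_mx a i j = if (j <= i)%N then a i / a ord_max * tail_prod j i.+1 else 0.
Proof. by rewrite mxE. Qed.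

Lemma E_mxE (i j : 'I_n.+1) :
  E_mx a i j = if (j <= i)%N then a ord_max / a i * tail_inv_prod i j else 0.
Proof. by rewrite mxE. Qed.

Lemma S_mx_trig : is_trig_mx (S_mx a).
Proof. by apply/is_trig_mxP => i j ij; rewrite mxE leqNgt ij. Qed.

Lemma D_mx_trig : is_trig_mx (D_mx a).
Proof. by apply/is_trig_mxP => i j ij; rewrite D_mxE leqNgt ij. Qed.

Lemma E_mx_trig : is_trig_mx (E_mx a).
Proof. by apply/is_trig_mxP => i j ij; rewrite E_mxE leqNgt ij. Qed.

Lemma S_mx_mulmxE (M : 'M[F]_n.+1) (i j : 'I_n.+1) :
  (S_mx a *m M) i j = a i * \sum_(m < n.+1 | (m <= i)%N) M m j.
Proof.
rewrite mxE mulr_sumr [in RHS]big_mkcond; apply: eq_bigr => m _ /=.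
by rewrite mxE; case: ifP; rewrite ?mul0r ?mulr0.
Qed.

Lemma mulmx_S_mxE (M : 'M[F]_n.+1) (i j : 'I_n.+1) :
  (M *m S_mx a) i j = \sum_(m < n.+1 | (j <= m)%N) M i m * a m.
Proof.
rewrite mxE [in RHS]big_mkcond; apply: eq_bigr => m _ /=.
by rewrite mxE; case: ifP; rewrite ?mulr0.
Qed.

Lemma S_mx_D_mx : S_mx a *m D_mx a = D_mx a *m diagN a.
Proof.
apply/matrixP => i j; rewrite S_mx_mulmxE mul_mx_diag !mxE -/(tail_prod j i.+1).
case: (leqP j i) => [ji|ij]; last first.
  rewrite big1 ?mulr0 ?mul0r // => m mi.
  by rewrite D_mxE leqNgt (leq_ltn_trans mi ij).
have -> : \sum_(m < n.+1 | (m <= i)%N) D_mx a m j =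
          (\sum_(j <= m < i.+1) a (inord m) * tail_prod j m.+1) / a ord_max.
  rewrite mulr_suml -(sum_ord_nat_range j _ (ltn_ord i)) big_mkcondl.
  apply: eq_bigr => m _.
  by rewrite D_mxE inord_val; case: ifP; rewrite ?mul0r // mulrAC.
rewrite sum_tail_prod; last by rewrite ji /= -ltnS ltn_ord.
by ring.
Qed.

Lemma E_mx_S_mx : E_mx a *m S_mx a = diagN a *m E_mx a.
Proof.
apply/matrixP => i j; rewrite mulmx_S_mxE mul_diag_mx !mxE -/(tail_inv_prod i j).
case: (leqP j i) => [ji|ij]; last first.
  rewrite big1 ?mulr0 // => m jm.
  by rewrite E_mxE leqNgt (leq_trans ij jm) mul0r.
have -> : \sum_(m < n.+1 | (j <= m)%N) E_mx a i m * a m =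
          a ord_max / a i * \sum_(j <= m < i.+1) a (inord m) * tail_inv_prod i m.
  rewrite mulr_sumr -(sum_ord_nat_range j _ (ltn_ord i)).
  under eq_bigr do rewrite E_mxE.
  rewrite big_mkcondr; apply: eq_bigr => m _.
  by case: ifP; rewrite ?mul0r // inord_val mulrCA mulrC.
by rewrite sum_tail_inv_prod // mulrCA.
Qed.

Lemma E_mx_D_mx : E_mx a *m D_mx a = 1%:M.
Proof.
have commED : (E_mx a *m D_mx a) *m diagN a = diagN a *m (E_mx a *m D_mx a).
  by rewrite -mulmxA -S_mx_D_mx mulmxA E_mx_S_mx -mulmxA.
have /is_diag_mxP offdiag := comm_diag_mx_is_diag a_inj commED.
apply/matrixP => i j; rewrite [RHS]mxE.
case: (eqVneq i j) => [<-|ij]; last by rewrite offdiag.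
rewrite mulmx_trig_diag ?E_mx_trig ?D_mx_trig // E_mxE D_mxE leqnn tail_inv_prod_id.
have := tail_prod_neq0 (ltnSn i); have := a_neq0 i; have := a_neq0 ord_max.
move: (tail_prod i i.+1) => P aN ai P0.
by rewrite mulr1n; field; rewrite aN ai P0.
Qed.

Lemma S_mx_col_D_mx (j : 'I_n.+1) :
  S_mx a *m col j (D_mx a) = a j *: col j (D_mx a).
Proof.
rewrite !colE mulmxA S_mx_D_mx -mulmxA scalemxAr; congr (_ *m _).
apply/matrixP => i k; rewrite [k]ord1 mul_diag_mx !mxE.
by case: (eqVneq i j) => [->|_]; rewrite ?mulr1 ?mulr0.
Qed.

Lemma col_D_mx_neq0 (j : 'I_n.+1) : col j (D_mx a) != 0.
Proof.
apply: contraTneq (tail_prod_neq0 (ltnSn j)) => /matrixP /(_ j 0).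
rewrite !mxE leqnn -/(tail_prod j j.+1) => /eqP.
by rewrite !mulf_eq0 invr_eq0 !(negPf (a_neq0 _)) /= => ->.
Qed.

End TriangularEigenbasis.

Theorem proposition2p2 (C : numClosedFieldType) (n : nat) (a : 'I_n.+1 -> C)
    (ha0 : forall i, a i != 0) (hinj : injective a) :
  (forall x : C, eigenvalue (S_mx a) x <-> exists i, x = a i) /\
  (forall j : 'I_n.+1,
      col j (D_mx a) != 0 /\ S_mx a *m col j (D_mx a) = a j *: col j (D_mx a)) /\
  (D_mx a \in unitmx /\ invmx (D_mx a) = E_mx a) /\
  S_mx a = D_mx a *m diagN a *m E_mx a /\
  (forall k : nat, (0 < k)%N ->
      S_mx a ^+ k = D_mx a *m diagN (fun i => a i ^+ k) *m E_mx a).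
Proof.
have ED := E_mx_D_mx ha0 hinj.
have [_ D_unit] := mulmx1_unit ED.
have invD : invmx (D_mx a) = E_mx a by rewrite -[invmx _]mul1mx -ED mulmxK.
have S_diag : S_mx a = D_mx a *m diagN a *m E_mx a.
  by rewrite -(S_mx_D_mx ha0) -mulmxA (mulmx1C ED) mulmx1.
split.
  move=> x; rewrite (eigenvalue_trig_mx _ (S_mx_trig a)).
  by split=> -[i ->]; exists i; rewrite mxE leqnn.
split; first by move=> j; split; [apply: col_D_mx_neq0 | apply: S_mx_col_D_mx].
do 2!split=> //.
by case=> // k _; rewrite S_diag conj_mx_exp // diagN_exp.
Qed.
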